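(* Every group $G\subset \mathrm{Diff}^1_+([0,1])$ without hyperbolic fixed points is without linked fixed points.
   Context: $G\subset \mathrm{Diff}^1_+([0,1])$ is without hyperbolic fixed points if for every $g\in G$ and every $x\in\mathrm{Fix}(g)$ one has $Dg(x)=1$. For a group $G$ of homeomorphisms of $[0,1]$, a pair of successive fixed points of $G$ is a pair $\{a,b\}$, $a<b$, such that $(a,b)$ is a connected component of $[0,1]\setminus \mathrm{Fix}(g)$ for some $g\in G$. Two pairs $\{a,b\}$ and $\{c,d\}$ are linked if $(a,b)\cap\{c,d\}$ or $(c,d)\cap\{a,b\}$ consists of exactly one point. $G$ is without linked fixed points if no two pairs of successive fixed points of $G$ are linked. *)

From Stdlib Require Import Reals.
Open Scope R_scope.

Definition I01 (x : R) : Prop := 0 <= x <= 1.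

(* One-sided-at-the-endpoints derivative on [0,1]:
   f has derivative l at x within [0,1]. *)
Definition has_deriv01 (f : R -> R) (x l : R) : Prop :=
  limit1_in (fun y => (f y - f x) / (y - x))
            (fun y => I01 y /\ y <> x) l x.

Definition C1_01 (f : R -> R) : Prop :=
  exists f' : R -> R,
    (forall x, I01 x -> has_deriv01 f x (f' x)) /\
    (forall x, I01 x -> limit1_in f' I01 (f' x) x).

Definition Diff1plus (f : R -> R) : Prop :=
  (forall x, I01 x -> I01 (f x)) /\
  (exists g : R -> R,
     (forall x, I01 x -> I01 (g x)) /\
     (forall x, I01 x -> g (f x) = x) /\
     (forall x, I01 x -> f (g x) = x) /\
     C1_01 f /\ C1_01 g) /\
  (forall x y, I01 x -> I01 y -> x < y -> f x < f y).

(* G (a set of maps R -> R, considered through their restrictions to [0,1])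
   is a group under composition, equality being equality on [0,1]. *)
Definition is_group01 (G : (R -> R) -> Prop) : Prop :=
  (exists e, G e /\ forall x, I01 x -> e x = x) /\
  (forall f g, G f -> G g -> exists h, G h /\ forall x, I01 x -> h x = f (g x)) /\
  (forall f, G f -> exists h, G h /\ forall x, I01 x -> h (f x) = x /\ f (h x) = x).

Definition no_hyperbolic_fixed (G : (R -> R) -> Prop) : Prop :=
  forall g x, G g -> I01 x -> g x = x -> has_deriv01 g x 1.

(* {a,b}, a<b, is a pair of successive fixed points of G: (a,b) is a connected
   component of [0,1] \ Fix(g) for some g in G, i.e. a, b in [0,1] are fixed by g
   and g has no fixed point in (a,b). *)
Definition succ_fixed (G : (R -> R) -> Prop) (a b : R) : Prop :=
  exists g, G g /\ 0 <= a /\ a < b /\ b <= 1 /\ g a = a /\ g b = b /\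
    (forall x, a < x < b -> g x <> x).

Definition exactly_one_in (a b c d : R) : Prop :=
  (a < c < b /\ ~ (a < d < b)) \/ (~ (a < c < b) /\ a < d < b).

Definition linked (a b c d : R) : Prop :=
  exactly_one_in a b c d \/ exactly_one_in c d a b.

Definition no_linked_fixed (G : (R -> R) -> Prop) : Prop :=
  forall a b c d, succ_fixed G a b -> succ_fixed G c d -> ~ linked a b c d.

(* Suppose two pairs of successive fixed points are linked.  Each pair is the
   support of an element of G pushing its interior to the right and of one
   pushing it to the left (an element or its inverse; [both_directions]).
   Linking then yields a "crossing": maps F, H in G and an interval [c,b] with
   F fixing b and pushing [c,b) to the right, H fixing c and pushing (c,b] to
   the left (up to an endpoint, repaired with a first/last fixed point of a
   composite, [no_crossing_right]/[no_crossing_left]).  Iterating, F^N and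
   H^M send [c,b] into disjoint subintervals: a ping-pong pair.  The core of
   the proof ([no_ping_pong]) shows that no such pair exists: the 2^n images
   of [c,b] under words of length n are disjoint, so most are short; with
   the bounded distortion of C^1 diffeomorphisms ([diff_distortion],
   [word_distortion]) a counting argument ([contracting_word]) gives a word
   contracting [c,b] by 1/2, while by Knaster-Tarski it has a fixed point in
   [c,b], where its derivative must be 1. *)

From Stdlib Require Import Reals Lra Classical List.
Import ListNotations.
Open Scope R_scope.

Lemma limit1_in_eps (f : R -> R) (D : R -> Prop) (l x : R) :
  limit1_in f D l x ->
  forall eps, 0 < eps -> exists d, 0 < d /\
    forall y, D y -> Rabs (y - x) < d -> Rabs (f y - l) < eps.
Proof.
  intros H eps Heps. destruct (H eps Heps) as [d [Hd Hy]].
  exists d; split; [lra|]. intros y Dy Hyx. apply (Hy y). split; auto.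
Qed.

Definition cont01_at (f : R -> R) (x : R) : Prop :=
  forall eps, 0 < eps -> exists d, 0 < d /\
    forall y, I01 y -> Rabs (y - x) < d -> Rabs (f y - f x) < eps.

Definition cont01 (f : R -> R) : Prop := forall x, I01 x -> cont01_at f x.

(* Differentiability within [0,1] implies continuity within [0,1]:
   |f y - f x| <= (|l| + 1) |y - x| near x. *)
Lemma has_deriv01_cont (f : R -> R) (x l : R) : has_deriv01 f x l -> cont01_at f x.
Proof.
  intros Hder eps Heps.
  destruct (limit1_in_eps _ _ _ _ Hder 1 ltac:(lra)) as [d [Hd Hq]].
  assert (Hl : 0 < Rabs l + 1) by (pose proof (Rabs_pos l); lra).
  exists (Rmin d (eps / (Rabs l + 1))). split.
  { apply Rmin_pos; [lra | apply Rdiv_lt_0_compat; lra]. }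
  intros y Iy Hyx.
  destruct (Req_dec y x) as [->|Hne].
  { unfold Rminus; rewrite Rplus_opp_r, Rabs_R0; lra. }
  pose proof (Rmin_l d (eps / (Rabs l + 1))). pose proof (Rmin_r d (eps / (Rabs l + 1))).
  specialize (Hq y (conj Iy Hne) ltac:(lra)).
  set (q := (f y - f x) / (y - x)) in Hq.
  assert (Eq : f y - f x = q * (y - x)) by (unfold q; field; lra).
  assert (Hqbound : Rabs q <= Rabs l + 1).
  { pose proof (Rabs_triang (q - l) l). replace (q - l + l) with q in * by ring. lra. }
  rewrite Eq, Rabs_mult.
  apply Rle_lt_trans with ((Rabs l + 1) * Rabs (y - x)).
  { apply Rmult_le_compat_r; [apply Rabs_pos | lra]. }
  apply Rlt_le_trans with ((Rabs l + 1) * (eps / (Rabs l + 1))).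
  { apply Rmult_lt_compat_l; lra. }
  right; field; lra.
Qed.

Lemma C1_01_cont (f : R -> R) : C1_01 f -> cont01 f.
Proof. intros [f' [Hd _]] x Ix. exact (has_deriv01_cont f x (f' x) (Hd x Ix)). Qed.

Lemma limit1_in_cont01 (f : R -> R) :
  (forall x, I01 x -> limit1_in f I01 (f x) x) -> cont01 f.
Proof.
  intros H x Ix eps Heps.
  destruct (limit1_in_eps _ _ _ _ (H x Ix) eps Heps) as [d [Hd Hy]]. eauto.
Qed.

(* The retraction of R onto [0,1]; it transports continuity within [0,1] to
   continuity on R, so that the real-analysis library applies. *)
Definition clamp01 (x : R) : R := Rmax 0 (Rmin 1 x).

Lemma clamp01_I01 (x : R) : I01 (clamp01 x).
Proof. unfold clamp01, I01, Rmax, Rmin. repeat destruct Rle_dec; lra. Qed.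

Lemma clamp01_id (x : R) : I01 x -> clamp01 x = x.
Proof. unfold clamp01, I01, Rmax, Rmin. intros. repeat destruct Rle_dec; lra. Qed.

Lemma clamp01_lipschitz (x y : R) : Rabs (clamp01 x - clamp01 y) <= Rabs (x - y).
Proof.
  unfold clamp01, Rmax, Rmin, Rabs.
  repeat destruct Rle_dec; repeat destruct Rcase_abs; lra.
Qed.

Lemma cont01_clamp (f : R -> R) : cont01 f -> continuity (fun y => f (clamp01 y)).
Proof.
  intros Hf x eps Heps.
  destruct (Hf (clamp01 x) (clamp01_I01 x) eps Heps) as [d [Hd Hy]].
  exists d; split; [lra|]. intros y [_ Hyx]. simpl in *; unfold R_dist in *.
  apply Hy; [apply clamp01_I01|].
  eapply Rle_lt_trans; [apply clamp01_lipschitz | exact Hyx].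
Qed.

Lemma MVT01 (f f' : R -> R) : (forall x, I01 x -> has_deriv01 f x (f' x)) ->
  forall s t, I01 s -> I01 t -> s < t ->
  exists z, s <= z <= t /\ f t - f s = f' z * (t - s).
Proof.
  intros Hd s t Is It Hst.
  assert (Hcont : cont01 f) by (intros x Ix; exact (has_deriv01_cont f x _ (Hd x Ix))).
  set (fc := fun y => f (clamp01 y)).
  (* In the interior of [0,1] the clamped function has an honest derivative. *)
  assert (Hder : forall z, s < z < t -> derivable_pt_lim fc z (f' z)).
  { intros z Hz eps Heps. unfold I01 in *.
    assert (Iz : I01 z) by (unfold I01; lra).
    destruct (limit1_in_eps _ _ _ _ (Hd z Iz) eps Heps) as [a [Ha Hq]].
    assert (Hpos : 0 < Rmin a (Rmin z (1 - z))) by (repeat apply Rmin_pos; lra).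
    exists (mkposreal _ Hpos). intros h Hh0 Hh. simpl in Hh.
    pose proof (Rmin_l a (Rmin z (1 - z))). pose proof (Rmin_r a (Rmin z (1 - z))).
    pose proof (Rmin_l z (1 - z)). pose proof (Rmin_r z (1 - z)).
    assert (Hh2 : - z < h < 1 - z) by (unfold Rabs in Hh; destruct Rcase_abs; lra).
    assert (Izh : I01 (z + h)) by (unfold I01; lra).
    unfold fc. rewrite (clamp01_id (z + h) Izh), (clamp01_id z Iz).
    replace h with ((z + h) - z) at 2 by ring.
    apply Hq; [split; [exact Izh | intro E; apply Hh0; lra] |].
    replace (z + h - z) with h by ring. lra. }
  set (pr1 := fun z (P : s < z < t) =>
                exist (fun l => derivable_pt_lim fc z l) (f' z) (Hder z P)).
  set (pr2 := fun z (P : s < z < t) =>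
                exist (fun l => derivable_pt_lim id z l) 1 (derivable_pt_lim_id z)).
  destruct (MVT fc id s t pr1 pr2 Hst) as [z [P Hz]].
  { intros z _. apply cont01_clamp; exact Hcont. }
  { intros z _. apply derivable_continuous_pt. exists 1. apply derivable_pt_lim_id. }
  unfold derive_pt, pr1, pr2 in Hz. simpl in Hz. unfold fc, id in Hz.
  rewrite (clamp01_id s Is), (clamp01_id t It) in Hz.
  exists z. split; lra.
Qed.

Lemma cont01_bounded (g : R -> R) : cont01 g ->
  exists M, 0 < M /\ forall x, I01 x -> Rabs (g x) <= M.
Proof.
  intros Hg.
  assert (Habs : cont01 (fun x => Rabs (g x))).
  { intros x Ix eps Heps. destruct (Hg x Ix eps Heps) as [d [Hd Hy]].
    exists d; split; [lra|]. intros y Iy Hyx.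
    eapply Rle_lt_trans; [apply Rabs_triang_inv2 | auto]. }
  destruct (continuity_ab_maj (fun y => Rabs (g (clamp01 y))) 0 1 ltac:(lra)
              (fun z _ => cont01_clamp _ Habs z)) as [Mx [HM _]].
  exists (Rabs (g (clamp01 Mx)) + 1). split; [pose proof (Rabs_pos (g (clamp01 Mx))); lra|].
  intros x Ix. specialize (HM x Ix). simpl in HM. rewrite (clamp01_id x Ix) in HM. lra.
Qed.

Lemma cont01_uniform (g : R -> R) : cont01 g -> forall eps, 0 < eps -> exists d, 0 < d /\
  forall x y, I01 x -> I01 y -> Rabs (x - y) < d -> Rabs (g x - g y) < eps.
Proof.
  intros Hg eps Heps.
  destruct (Heine (fun y => g (clamp01 y)) (fun z => 0 <= z <= 1) (compact_P3 0 1)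
              (fun z _ => cont01_clamp g Hg z) (mkposreal eps Heps)) as [d Hd].
  exists d. split; [apply cond_pos|].
  intros x y Ix Iy Hxy. specialize (Hd x y Ix Iy Hxy). simpl in Hd.
  rewrite (clamp01_id x Ix), (clamp01_id y Iy) in Hd. exact Hd.
Qed.

Lemma diff_maps (g : R -> R) : Diff1plus g -> forall x, I01 x -> I01 (g x).
Proof. intros [H _]; exact H. Qed.

Lemma diff_increasing (g : R -> R) : Diff1plus g ->
  forall x y, I01 x -> I01 y -> x < y -> g x < g y.
Proof. intros [_ [_ H]]; exact H. Qed.

Lemma diff_nondecreasing (g : R -> R) : Diff1plus g ->
  forall x y, I01 x -> I01 y -> x <= y -> g x <= g y.
Proof.
  intros Hg x y Ix Iy [Hxy | ->]; [left; apply diff_increasing; auto | lra].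
Qed.

Lemma diff_cont (g : R -> R) : Diff1plus g -> cont01 g.
Proof. intros [_ [[_ [_ [_ [_ [Cg _]]]]] _]]. exact (C1_01_cont g Cg). Qed.

Definition slope (f : R -> R) (s t : R) : R := (f t - f s) / (t - s).

Lemma slope_pos (f : R -> R) (s t : R) : s < t -> f s < f t -> 0 < slope f s t.
Proof. intros. unfold slope. apply Rdiv_lt_0_compat; lra. Qed.

Lemma slope_sym (f : R -> R) (s t : R) : s <> t -> slope f s t = slope f t s.
Proof. intros. unfold slope. field. lra. Qed.

Lemma slope_comp (f g : R -> R) (s t : R) : s <> t -> g s <> g t ->
  slope (fun x => f (g x)) s t = slope f (g s) (g t) * slope g s t.
Proof. intros. unfold slope. field. lra. Qed.

Lemma slope_mvt (f f' : R -> R) : (forall x, I01 x -> has_deriv01 f x (f' x)) ->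
  forall s t, I01 s -> I01 t -> s < t -> exists z, s <= z <= t /\ slope f s t = f' z.
Proof.
  intros Hd s t Is It Hst. destruct (MVT01 f f' Hd s t Is It Hst) as [z [Hz E]].
  exists z. split; [exact Hz|]. unfold slope. rewrite E. field. lra.
Qed.

(* The difference quotients of a C^1 diffeomorphism are bounded above and
   away from 0, the lower bound coming from the derivative of the inverse. *)
Lemma diff_slope_bounds (l : R -> R) : Diff1plus l -> exists m M, 0 < m /\
  forall s t, I01 s -> I01 t -> s < t -> m <= slope l s t <= M.
Proof.
  intros Dl. pose proof Dl as [Hmaps [[k [_ [Hkl [_ [Cl Ck]]]]] _]].
  destruct Cl as [l' [Hdl Hcl]]. destruct Ck as [k' [Hdk Hck]].
  destruct (cont01_bounded l' (limit1_in_cont01 l' Hcl)) as [M1 [HM1 HB1]].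
  destruct (cont01_bounded k' (limit1_in_cont01 k' Hck)) as [M2 [HM2 HB2]].
  exists (/ M2), M1. split; [apply Rinv_0_lt_compat; lra|].
  intros s t Is It Hst.
  assert (Hl : l s < l t) by (apply diff_increasing; auto).
  assert (Hq : 0 < slope l s t) by (apply slope_pos; auto).
  destruct (slope_mvt l l' Hdl s t Is It Hst) as [z [Hz Ez]].
  destruct (slope_mvt k k' Hdk (l s) (l t) (Hmaps s Is) (Hmaps t It) Hl) as [z2 [Hz2 Ez2]].
  assert (Iz : I01 z) by (unfold I01 in *; lra).
  assert (Iz2 : I01 z2)
    by (pose proof (Hmaps s Is); pose proof (Hmaps t It); unfold I01 in *; lra).
  assert (Einv : slope k (l s) (l t) = / slope l s t).
  { unfold slope. rewrite !Hkl by auto. field. lra. }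
  pose proof (Rle_abs (l' z)). pose proof (Rle_abs (k' z2)).
  pose proof (HB1 z Iz). pose proof (HB2 z2 Iz2).
  split; [|lra].
  rewrite <- (Rinv_inv (slope l s t)).
  apply Rinv_le_contravar; [apply Rinv_0_lt_compat; lra | lra].
Qed.

(* Uniform continuity of the derivative: on short intervals the difference
   quotient on a subinterval exceeds that on the interval by at most [eps]. *)
Lemma C1_slope_oscillation (l : R -> R) : C1_01 l -> forall eps, 0 < eps ->
  exists eta, 0 < eta /\ forall u v u' v', I01 u' -> I01 v' -> u' <= u -> u < v -> v <= v' ->
    v' - u' <= eta -> slope l u v <= slope l u' v' + eps.
Proof.
  intros [l' [Hdl Hcl]] eps Heps.
  destruct (cont01_uniform l' (limit1_in_cont01 l' Hcl) eps Heps) as [d [Hd Hunif]].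
  exists (d / 2). split; [lra|].
  intros u v u' v' Iu' Iv' H1 Huv H2 Hshort.
  assert (Iu : I01 u) by (unfold I01 in *; lra).
  assert (Iv : I01 v) by (unfold I01 in *; lra).
  destruct (slope_mvt l l' Hdl u v Iu Iv Huv) as [z [Hz ->]].
  destruct (slope_mvt l l' Hdl u' v' Iu' Iv' ltac:(lra)) as [z' [Hz' ->]].
  assert (Iz : I01 z) by (unfold I01 in *; lra).
  assert (Iz' : I01 z') by (unfold I01 in *; lra).
  assert (Hzz : Rabs (z - z') < d) by (unfold Rabs; destruct Rcase_abs; lra).
  pose proof (Hunif z z' Iz Iz' Hzz). pose proof (Rle_abs (l' z - l' z')). lra.
Qed.

Definition distortion_ctl (l : R -> R) (L eta : R) : Prop :=
  forall u v u' v', I01 u' -> I01 v' -> u' <= u -> u < v -> v <= v' ->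
    slope l u v <= L * slope l u' v' /\
    (v' - u' <= eta -> slope l u v <= 3/2 * slope l u' v').

Lemma diff_distortion (l : R -> R) : Diff1plus l ->
  exists L eta, 1 <= L /\ 0 < eta /\ distortion_ctl l L eta.
Proof.
  intros Dl.
  destruct (diff_slope_bounds l Dl) as [m [M [Hm Hbounds]]].
  pose proof Dl as [_ [[k [_ [_ [_ [Cl _]]]]] _]].
  destruct (C1_slope_oscillation l Cl (m / 2) ltac:(lra)) as [eta [Heta Hosc]].
  exists (Rmax 1 (M / m)), eta. split; [apply Rmax_l|]. split; [exact Heta|].
  intros u v u' v' Iu' Iv' H1 Huv H2.
  assert (Iu : I01 u) by (unfold I01 in *; lra).
  assert (Iv : I01 v) by (unfold I01 in *; lra).
  destruct (Hbounds u v Iu Iv Huv) as [_ Hup].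
  destruct (Hbounds u' v' Iu' Iv' ltac:(lra)) as [Hlow' _].
  split.
  - apply Rle_trans with (M / m * slope l u' v').
    + pose proof (Hbounds u v Iu Iv Huv).
      apply Rle_trans with (M / m * m); [apply Rle_trans with M; [lra | right; field; lra]|].
      apply Rmult_le_compat_l; [left; apply Rdiv_lt_0_compat; lra | exact Hlow'].
    + apply Rmult_le_compat_r; [lra | apply Rmax_r].
  - intros Hshort. pose proof (Hosc u v u' v' Iu' Iv' H1 Huv H2 Hshort). lra.
Qed.

Lemma distortion_ctl_weaken (l : R -> R) (L eta L' eta' : R) : Diff1plus l ->
  distortion_ctl l L eta -> L <= L' -> eta' <= eta -> distortion_ctl l L' eta'.
Proof.
  intros Dl Hctl HL Heta u v u' v' Iu' Iv' H1 Huv H2.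
  assert (Hq : 0 < slope l u' v').
  { apply slope_pos; [lra|]. apply diff_increasing; auto; lra. }
  destruct (Hctl u v u' v' Iu' Iv' H1 Huv H2) as [Hlong Hshort]. split.
  - eapply Rle_trans; [exact Hlong|]. apply Rmult_le_compat_r; lra.
  - intros Hs. apply Hshort. lra.
Qed.

Lemma iter_invariant (P : R -> Prop) (phi : R -> R) (n : nat) (x : R) :
  (forall y, P y -> P (phi y)) -> P x -> P (Nat.iter n phi x).
Proof. intros H Hx. induction n; simpl; auto. Qed.

(* Knaster-Tarski on a real interval: a nondecreasing self-map of [u,v] has a
   fixed point (the supremum of the points it moves up). *)
Lemma monotone_fixed_point (phi : R -> R) (u v : R) : u <= v ->
  (forall x, u <= x <= v -> u <= phi x <= v) ->
  (forall x y, u <= x -> x <= y -> y <= v -> phi x <= phi y) ->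
  exists p, u <= p <= v /\ phi p = p.
Proof.
  intros Huv Hmap Hmon.
  set (E := fun x => u <= x <= v /\ x <= phi x).
  assert (Hb : bound E) by (exists v; intros x [Hx _]; lra).
  assert (He : exists x, E x) by (exists u; split; [lra | apply Hmap; lra]).
  destruct (completeness E Hb He) as [p [Hub Hlub]].
  assert (Hup : u <= p) by (apply Hub; split; [lra | apply Hmap; lra]).
  assert (Hpv : p <= v) by (apply Hlub; intros x [Hx _]; lra).
  assert (H1 : p <= phi p).
  { apply Hlub. intros x [Hx Hx2]. apply Rle_trans with (phi x); [exact Hx2|].
    apply Hmon; try lra. apply Hub; split; auto. }
  assert (H2 : phi p <= p).
  { apply Hub. split; [apply Hmap; lra|]. apply Hmon; try lra; apply Hmap; lra. }
  exists p; split; lra.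
Qed.

Definition cont_on (u v : R) (phi : R -> R) : Prop :=
  forall x, u <= x <= v -> forall eps, 0 < eps -> exists d, 0 < d /\
    forall y, u <= y <= v -> Rabs (y - x) < d -> Rabs (phi y - phi x) < eps.

Lemma cont01_on (phi : R -> R) (u v : R) : cont01 phi -> 0 <= u -> v <= 1 -> cont_on u v phi.
Proof.
  intros H Hu Hv x Hx eps Heps.
  destruct (H x ltac:(unfold I01; lra) eps Heps) as [d [Hd Hy]].
  exists d; split; [exact Hd|]. intros y Hy1 Hy2. apply Hy; [unfold I01; lra | exact Hy2].
Qed.

(* Conjugation by the reflection x |-> -x exchanges the roles of left and
   right; it lets us prove only one of each pair of mirror statements. *)
Definition reflect (phi : R -> R) (x : R) : R := - phi (- x).

Lemma cont_on_reflect (phi : R -> R) (u v : R) :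
  cont_on u v phi -> cont_on (- v) (- u) (reflect phi).
Proof.
  intros H x Hx eps Heps. destruct (H (- x) ltac:(lra) eps Heps) as [d [Hd Hy]].
  exists d; split; [exact Hd|]. intros y Hy1 Hy2. unfold reflect.
  replace (- phi (- y) - - phi (- x)) with (- (phi (- y) - phi (- x))) by ring.
  rewrite Rabs_Ropp. apply Hy; [lra|].
  replace (- y - - x) with (- (y - x)) by ring. rewrite Rabs_Ropp; exact Hy2.
Qed.

Lemma iter_reflect (phi : R -> R) (n : nat) (x : R) :
  Nat.iter n (reflect phi) (- x) = - Nat.iter n phi x.
Proof. induction n; simpl; [reflexivity|]. rewrite IHn. unfold reflect. rewrite Ropp_involutive. reflexivity. Qed.

Lemma moved_right_persists (phi : R -> R) (u v x : R) : cont_on u v phi -> u <= x <= v ->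
  x < phi x -> exists d, 0 < d /\ forall t, u <= t <= v -> Rabs (t - x) < d -> t < phi t.
Proof.
  intros Hc Hx Hmove.
  destruct (Hc x Hx ((phi x - x) / 2) ltac:(lra)) as [d [Hd Hy]].
  exists (Rmin d ((phi x - x) / 2)). split; [apply Rmin_pos; lra|].
  intros t Ht Htx.
  pose proof (Rmin_l d ((phi x - x) / 2)). pose proof (Rmin_r d ((phi x - x) / 2)).
  specialize (Hy t Ht ltac:(lra)).
  pose proof (Rle_abs (t - x)). pose proof (Rle_abs (- (phi t - phi x))).
  rewrite Rabs_Ropp in *. lra.
Qed.

Lemma moved_left_persists (phi : R -> R) (u v x : R) : cont_on u v phi -> u <= x <= v ->
  phi x < x -> exists d, 0 < d /\ forall t, u <= t <= v -> Rabs (t - x) < d -> phi t < t.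
Proof.
  intros Hc Hx Hmove.
  destruct (moved_right_persists (reflect phi) (- v) (- u) (- x) (cont_on_reflect phi u v Hc))
    as [d [Hd Hy]]; [lra | unfold reflect; rewrite Ropp_involutive; lra |].
  exists d; split; [exact Hd|]. intros t Ht Htx.
  specialize (Hy (- t) ltac:(lra)). unfold reflect in Hy. rewrite Ropp_involutive in Hy.
  apply Ropp_lt_cancel, Hy.
  replace (- t - - x) with (- (t - x)) by ring. rewrite Rabs_Ropp; exact Htx.
Qed.

(* Under a continuous self-map of [q,p] moving every point of [q,p) to the
   right, the orbit of q accumulates at p: otherwise its supremum would be a
   point of [q,p) that is not moved. *)
Lemma orbit_climbs (phi : R -> R) (q p : R) : q < p ->
  (forall x, q <= x <= p -> q <= phi x <= p) -> cont_on q p phi ->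
  (forall x, q <= x < p -> x < phi x) ->
  forall eta, 0 < eta -> exists N, p - eta < Nat.iter N phi q.
Proof.
  intros Hqp Hmap Hc Hpush eta Heta.
  apply NNPP. intros Hnone.
  assert (Hbelow : forall N, Nat.iter N phi q <= p - eta).
  { intros N. apply Rnot_lt_le. intro H. apply Hnone. exists N. exact H. }
  assert (Hin : forall N, q <= Nat.iter N phi q <= p)
    by (intros N; apply (iter_invariant (fun y => q <= y <= p)); [exact Hmap | lra]).
  set (E := fun y => exists k, y = Nat.iter k phi q).
  assert (Hb : bound E) by (exists p; intros y [k ->]; apply Hin).
  destruct (completeness E Hb ltac:(exists q; exists O; reflexivity)) as [s [Hub Hlub]].
  assert (Hqs : q <= s) by (apply Hub; exists O; reflexivity).
  assert (Hsp : s <= p - eta) by (apply Hlub; intros y [k ->]; apply Hbelow).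
  destruct (Hc s ltac:(lra) (phi s - s) ltac:(specialize (Hpush s); lra)) as [d [Hd Hy]].
  (* Some orbit point lies within [d] below the supremum [s] ... *)
  assert (Hclose : exists k, s - d < Nat.iter k phi q).
  { apply NNPP. intro Hk. assert (s <= s - d); [|lra].
    apply Hlub. intros y [k ->]. apply Rnot_lt_le. intro H. apply Hk. exists k. exact H. }
  destruct Hclose as [k Hk].
  assert (Hks : Nat.iter k phi q <= s) by (apply Hub; exists k; reflexivity).
  (* ... and its image then lies above [s]. *)
  assert (Hnext : Nat.iter (S k) phi q <= s) by (apply Hub; exists (S k); reflexivity).
  specialize (Hy (Nat.iter k phi q) (Hin k) ltac:(unfold Rabs; destruct Rcase_abs; lra)).
  simpl in Hnext. pose proof (Rle_abs (- (phi (Nat.iter k phi q) - phi s))).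
  rewrite Rabs_Ropp in *. lra.
Qed.

Lemma orbit_descends (phi : R -> R) (p q : R) : p < q ->
  (forall x, p <= x <= q -> p <= phi x <= q) -> cont_on p q phi ->
  (forall x, p < x <= q -> phi x < x) ->
  forall eta, 0 < eta -> exists N, Nat.iter N phi q < p + eta.
Proof.
  intros Hpq Hmap Hc Hpush eta Heta.
  destruct (orbit_climbs (reflect phi) (- q) (- p) ltac:(lra)) with eta as [N HN].
  - intros x Hx. pose proof (Hmap (- x) ltac:(lra)). unfold reflect. lra.
  - apply cont_on_reflect; exact Hc.
  - intros x Hx. pose proof (Hpush (- x) ltac:(lra)). unfold reflect. lra.
  - exact Heta.
  - exists N. rewrite iter_reflect in HN. lra.
Qed.

Lemma first_fixed_point (phi : R -> R) (u y : R) : u < y -> cont_on u y phi ->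
  u < phi u -> phi y < y ->
  exists b, u < b <= y /\ phi b = b /\ forall x, u <= x < b -> x < phi x.
Proof.
  intros Huy Hc Hu Hy.
  set (S := fun x => u <= x <= y /\ forall t, u <= t <= x -> t < phi t).
  assert (Hb : bound S) by (exists y; intros x [Hx _]; lra).
  assert (Su : S u) by (split; [lra | intros t Ht; replace t with u by lra; exact Hu]).
  destruct (completeness S Hb (ex_intro _ u Su)) as [b [Hub Hlub]].
  assert (Hub1 : u <= b) by (apply Hub; exact Su).
  assert (Hby : b <= y) by (apply Hlub; intros x [Hx _]; lra).
  assert (Hbefore : forall t, u <= t < b -> t < phi t).
  { intros t Ht. apply NNPP. intro Hn.
    assert (b <= t); [|lra]. apply Hlub. intros x [Hx Hx2].
    apply Rnot_lt_le. intro Hlt. apply Hn, Hx2. lra. }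
  assert (Hfix : phi b = b).
  { destruct (Rtotal_order (phi b) b) as [Hlt|[Heq|Hgt]]; [exfalso | exact Heq | exfalso].
    - (* points just below b would be moved to the left *)
      destruct (moved_left_persists phi u y b Hc ltac:(lra) Hlt) as [d [Hd Hleft]].
      assert (Hub2 : u < b) by (destruct (Req_dec u b); [subst; lra | lra]).
      set (t := Rmax u (b - d / 2)).
      assert (Ht : u <= t < b) by (unfold t, Rmax; destruct Rle_dec; lra).
      pose proof (Hleft t ltac:(lra) ltac:(unfold t, Rmax, Rabs; destruct Rle_dec; destruct Rcase_abs; lra)).
      pose proof (Hbefore t Ht). lra.
    - (* points just above b would still be moved to the right *)
      destruct (moved_right_persists phi u y b Hc ltac:(lra) Hgt) as [d [Hd Hright]].
      assert (Hby2 : b < y) by (destruct (Req_dec b y); [subst; lra | lra]).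
      set (x := Rmin (b + d / 2) y).
      assert (Hx : b < x <= y) by (unfold x, Rmin; destruct Rle_dec; lra).
      assert (Sx : S x).
      { split; [lra|]. intros t Ht. destruct (Rlt_or_le t b) as [Htb|Htb].
        - apply Hbefore; lra.
        - apply Hright; [lra|]. unfold x, Rmin, Rabs in *; destruct Rle_dec; destruct Rcase_abs; lra. }
      pose proof (Hub x Sx). lra. }
  exists b. split; [|split; [exact Hfix | exact Hbefore]].
  split; [|exact Hby]. destruct (Req_dec u b) as [E|E]; [subst; lra | lra].
Qed.

Lemma last_fixed_point (phi : R -> R) (y d : R) : y < d -> cont_on y d phi ->
  y < phi y -> phi d < d ->
  exists c, y <= c < d /\ phi c = c /\ forall x, c < x <= d -> phi x < x.
Proof.
  intros Hyd Hc Hy Hd.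
  destruct (first_fixed_point (reflect phi) (- d) (- y)) as [b [Hb [Eb Hafter]]];
    [lra | apply cont_on_reflect; exact Hc | unfold reflect; rewrite Ropp_involutive; lra
    | unfold reflect; rewrite Ropp_involutive; lra |].
  unfold reflect in *. exists (- b). split; [lra|]. split; [lra|].
  intros x Hx. pose proof (Hafter (- x) ltac:(lra)). rewrite Ropp_involutive in *. lra.
Qed.

Definition represented (G : (R -> R) -> Prop) (u : R -> R) : Prop :=
  exists h, G h /\ forall x, I01 x -> h x = u x.

Lemma represented_elt (G : (R -> R) -> Prop) (f : R -> R) : G f -> represented G f.
Proof. intros Gf. exists f; auto. Qed.

Lemma represented_comp (G : (R -> R) -> Prop) (u v : R -> R) : is_group01 G ->
  represented G u -> represented G v -> (forall x, I01 x -> I01 (v x)) ->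
  represented G (fun x => u (v x)).
Proof.
  intros [_ [Hcomp _]] [hu [Gu Hu]] [hv [Gv Hv]] Hmaps.
  destruct (Hcomp hu hv Gu Gv) as [h [Gh Hh]].
  exists h; split; [exact Gh|]. intros x Ix. rewrite Hh, Hv, Hu; auto.
Qed.

Lemma represented_iter (G : (R -> R) -> Prop) (g : R -> R) (n : nat) : is_group01 G ->
  G g -> Diff1plus g -> represented G (Nat.iter n g).
Proof.
  intros HG Gg Dg. induction n as [|n IH].
  - destruct HG as [[e [Ge He]] _]. exists e; split; auto.
  - apply (represented_comp G g (Nat.iter n g) HG (represented_elt G g Gg) IH).
    intros x Ix. apply (iter_invariant I01); [apply diff_maps |]; auto.
Qed.

(* Maps represented in a group without hyperbolic fixed points have derivative
   1 at their fixed points, since the derivative only sees [0,1]. *)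
Lemma represented_parabolic (G : (R -> R) -> Prop) (u : R -> R) (p : R) :
  no_hyperbolic_fixed G -> represented G u -> I01 p -> u p = p -> has_deriv01 u p 1.
Proof.
  intros Hnh [h [Gh Hh]] Ip Efix.
  assert (Hder : has_deriv01 h p 1) by (apply Hnh; [exact Gh | exact Ip | rewrite Hh; auto]).
  intros eps Heps. destruct (Hder eps Heps) as [d [Hd Hy]].
  exists d; split; [exact Hd|]. intros y [[Iy Hyp] Hyd].
  rewrite <- (Hh y Iy), <- (Hh p Ip). apply Hy. split; auto.
Qed.

Lemma inverse_moves_opposite (f h : R -> R) (x : R) : Diff1plus h -> I01 x -> I01 (f x) ->
  h (f x) = x -> (x < f x -> h x < x) /\ (f x < x -> x < h x).
Proof.
  intros Dh Ix Ifx E. split; intros H.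
  - pose proof (diff_increasing h Dh x (f x) Ix Ifx H). lra.
  - pose proof (diff_increasing h Dh (f x) x Ifx Ix H). lra.
Qed.

Lemma diff_fixed_between (f : R -> R) (x y : R) : Diff1plus f -> I01 x -> I01 y -> x <= y ->
  x <= f x -> f y <= y -> exists p, x <= p <= y /\ f p = p.
Proof.
  intros Df Ix Iy Hxy Hx Hy. apply monotone_fixed_point; [exact Hxy | |].
  - intros z Hz. assert (Iz : I01 z) by (unfold I01 in *; lra).
    pose proof (diff_nondecreasing f Df x z Ix Iz ltac:(lra)).
    pose proof (diff_nondecreasing f Df z y Iz Iy ltac:(lra)). lra.
  - intros z1 z2 H1 H2 H3. apply diff_nondecreasing; auto; unfold I01 in *; lra.
Qed.

(* On an interval free of fixed points, an element of G moves all points in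
   the same direction: a change of direction would produce a fixed point,
   for f itself or for its inverse. *)
Lemma direction_constant (G : (R -> R) -> Prop) (f : R -> R) (a b : R) : is_group01 G ->
  (forall g, G g -> Diff1plus g) -> G f -> 0 <= a -> a < b -> b <= 1 ->
  (forall x, a < x < b -> f x <> x) ->
  (forall x, a < x < b -> x < f x) \/ (forall x, a < x < b -> f x < x).
Proof.
  intros HG HD Gf Ha Hab Hb Hnf.
  destruct HG as [_ [_ Hinv]]. destruct (Hinv f Gf) as [h [Gh Hh]].
  pose proof (HD f Gf) as Df. pose proof (HD h Gh) as Dh.
  assert (No_change : forall x y, a < x < b -> a < y < b -> x < f x -> f y < y -> False).
  { intros x y Hx Hy Hfx Hfy.
    assert (Ix : I01 x) by (unfold I01; lra). assert (Iy : I01 y) by (unfold I01; lra).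
    destruct (Rlt_or_le x y) as [Hxy|Hyx].
    - destruct (diff_fixed_between f x y Df Ix Iy ltac:(lra) ltac:(lra) ltac:(lra))
        as [p [Hp Ep]].
      exact (Hnf p ltac:(lra) Ep).
    - destruct (Hh x Ix) as [Ex _]. destruct (Hh y Iy) as [Ey _].
      pose proof (diff_maps f Df x Ix). pose proof (diff_maps f Df y Iy).
      pose proof (proj1 (inverse_moves_opposite f h x Dh Ix ltac:(auto) Ex) Hfx).
      pose proof (proj2 (inverse_moves_opposite f h y Dh Iy ltac:(auto) Ey) Hfy).
      destruct (diff_fixed_between h y x Dh Iy Ix Hyx ltac:(lra) ltac:(lra))
        as [p [Hp Ep]].
      assert (Ip : I01 p) by (unfold I01; lra).
      destruct (Hh p Ip) as [_ Efp]. rewrite Ep in Efp.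
      exact (Hnf p ltac:(lra) Efp). }
  set (m := (a + b) / 2). assert (Hm : a < m < b) by (unfold m; lra).
  destruct (Rtotal_order (f m) m) as [Hlt|[Heq|Hgt]].
  - right. intros x Hx. destruct (Rtotal_order (f x) x) as [?|[?|?]]; auto.
    + exfalso; exact (Hnf x Hx H).
    + exfalso; exact (No_change x m Hx Hm H Hlt).
  - exfalso; exact (Hnf m Hm Heq).
  - left. intros x Hx. destruct (Rtotal_order (f x) x) as [?|[?|?]]; auto.
    + exfalso; exact (No_change m x Hm Hx Hgt H).
    + exfalso; exact (Hnf x Hx H).
Qed.

Lemma both_directions (G : (R -> R) -> Prop) (a b : R) : is_group01 G ->
  (forall g, G g -> Diff1plus g) -> succ_fixed G a b ->
  (exists fr, G fr /\ fr a = a /\ fr b = b /\ forall x, a < x < b -> x < fr x) /\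
  (exists fl, G fl /\ fl a = a /\ fl b = b /\ forall x, a < x < b -> fl x < x).
Proof.
  intros HG HD [f [Gf (Ha & Hab & Hb & Efa & Efb & Hnf)]].
  pose proof (direction_constant G f a b HG HD Gf Ha Hab Hb Hnf) as Hdir.
  destruct HG as [_ [_ Hinv]]. destruct (Hinv f Gf) as [h [Gh Hh]].
  pose proof (HD f Gf) as Df. pose proof (HD h Gh) as Dh.
  assert (Ia : I01 a) by (unfold I01; lra). assert (Ib : I01 b) by (unfold I01; lra).
  assert (Eha : h a = a) by (destruct (Hh a Ia) as [E _]; rewrite Efa in E; exact E).
  assert (Ehb : h b = b) by (destruct (Hh b Ib) as [E _]; rewrite Efb in E; exact E).
  assert (Hopp : forall x, a < x < b -> (x < f x -> h x < x) /\ (f x < x -> x < h x)).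
  { intros x Hx. assert (Ix : I01 x) by (unfold I01; lra).
    apply inverse_moves_opposite; auto; [apply diff_maps; auto | apply (Hh x Ix)]. }
  destruct Hdir as [Hr|Hl]; split.
  - exists f; auto.
  - exists h; repeat split; auto. intros x Hx. apply (Hopp x Hx), Hr, Hx.
  - exists h; repeat split; auto. intros x Hx. apply (Hopp x Hx), Hl, Hx.
  - exists f; auto.
Qed.

Fixpoint sumL {X : Type} (f : X -> R) (l : list X) : R :=
  match l with nil => 0 | w :: l' => f w + sumL f l' end.

Lemma sumL_app {X : Type} (f : X -> R) (l1 l2 : list X) :
  sumL f (l1 ++ l2) = sumL f l1 + sumL f l2.
Proof. induction l1; simpl; [ring | rewrite IHl1; ring]. Qed.

Lemma sumL_map {X Y : Type} (f : Y -> R) (g : X -> Y) (l : list X) :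
  sumL f (map g l) = sumL (fun w => f (g w)) l.
Proof. induction l; simpl; [reflexivity | rewrite IHl; reflexivity]. Qed.

Lemma sumL_le {X : Type} (f g : X -> R) (l : list X) :
  (forall w, In w l -> f w <= g w) -> sumL f l <= sumL g l.
Proof.
  induction l as [|a l IH]; simpl; intros H; [lra|].
  pose proof (H a (or_introl eq_refl)). pose proof (IH (fun w Hw => H w (or_intror Hw))). lra.
Qed.

Lemma sumL_plus {X : Type} (f g : X -> R) (l : list X) :
  sumL (fun w => f w + g w) l = sumL f l + sumL g l.
Proof. induction l; simpl; [ring | rewrite IHl; ring]. Qed.

Lemma sumL_scal {X : Type} (k : R) (f : X -> R) (l : list X) :
  sumL (fun w => k * f w) l = k * sumL f l.
Proof. induction l; simpl; [ring | rewrite IHl; ring]. Qed.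

(* Otherwise len >= C (1 - k / B0) everywhere, and summing this
   linear bound contradicts the two mean bounds. *)
Lemma averaging {X : Type} (l : list X) (len : X -> R) (k : X -> nat) (C : R) (B0 : nat) :
  0 < C -> (0 < B0)%nat -> (forall w, In w l -> 0 <= len w) ->
  sumL (fun w => INR (k w)) l <= INR B0 / 2 * sumL (fun _ => 1) l ->
  sumL len l < C / 2 * sumL (fun _ => 1) l ->
  exists w, In w l /\ (k w <= B0)%nat /\ len w < C.
Proof.
  intros HC HB0 Hpos Hk Hlen. apply NNPP. intros Hnone.
  assert (HB : 0 < INR B0) by (apply lt_0_INR; exact HB0).
  assert (Hrate : 0 < C / INR B0) by (apply Rdiv_lt_0_compat; lra).
  assert (Hlow : forall w, In w l -> C * 1 + - (C / INR B0) * INR (k w) <= len w).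
  { intros w Hw. pose proof (Hpos w Hw). destruct (Nat.le_gt_cases (k w) B0) as [Hle|Hgt].
    - assert (C <= len w) by (apply Rnot_lt_le; intro; apply Hnone; exists w; auto).
      pose proof (Rmult_le_pos _ _ (Rlt_le _ _ Hrate) (pos_INR (k w))). lra.
    - apply lt_INR in Hgt.
      assert (C / INR B0 * INR B0 < C / INR B0 * INR (k w))
        by (apply Rmult_lt_compat_l; assumption).
      replace (C / INR B0 * INR B0) with C in * by (field; lra). lra. }
  pose proof (sumL_le _ _ l Hlow) as Hsum.
  rewrite sumL_plus, !sumL_scal in Hsum.
  assert (C / INR B0 * sumL (fun w => INR (k w)) l <= C / 2 * sumL (fun _ => 1) l).
  { apply Rle_trans with (C / INR B0 * (INR B0 / 2 * sumL (fun _ => 1) l)).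
    - apply Rmult_le_compat_l; lra.
    - right; field; lra. }
  lra.
Qed.

(* Words in two letters, [true] standing for A and [false] for B; the letter
   at the head of the list acts last. *)
Fixpoint apply_word (A B : R -> R) (w : list bool) (x : R) : R :=
  match w with
  | nil => x
  | t :: w' => (if t then A else B) (apply_word A B w' x)
  end.

Fixpoint words (n : nat) : list (list bool) :=
  match n with
  | O => [nil]
  | S n => map (cons true) (words n) ++ map (cons false) (words n)
  end.

Lemma words_count (n : nat) : sumL (fun _ => 1) (words n) = 2 ^ n.
Proof. induction n; simpl; [ring|]. rewrite sumL_app, !sumL_map, IHn. ring. Qed.

Lemma words_length (n : nat) (w : list bool) : In w (words n) -> length w = n.
Proof.
  revert w; induction n; simpl; intros w H.
  - destruct H as [<-|[]]; reflexivity.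
  - apply in_app_or in H.
    destruct H as [H|H]; apply in_map_iff in H; destruct H as [w' [<- H]]; simpl; auto.
Qed.

Lemma represented_word (G : (R -> R) -> Prop) (A B : R -> R) (w : list bool) :
  is_group01 G -> G A -> G B -> Diff1plus A -> Diff1plus B ->
  represented G (apply_word A B w).
Proof.
  intros HG GA GB DA DB. induction w as [|t w IH].
  - destruct HG as [[e [Ge He]] _]. exists e; split; auto.
  - apply (represented_comp G (if t then A else B) (apply_word A B w) HG);
      [destruct t; apply represented_elt; auto | exact IH |].
    intros x Ix. clear IH. induction w as [|t' w IH]; simpl; [exact Ix|].
    destruct t'; apply diff_maps; auto.
Qed.

Record ping_pong (A B : R -> R) (c b : R) : Prop := {
  pp_lo : 0 <= c;
  pp_lt : c < b;
  pp_hi : b <= 1;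
  pp_diffA : Diff1plus A;
  pp_diffB : Diff1plus B;
  pp_mapsA : forall x, c <= x <= b -> c <= A x <= b;
  pp_mapsB : forall x, c <= x <= b -> c <= B x <= b;
  pp_disjoint : B b <= A c }.

Section PingPong.

Variables (A B : R -> R) (c b : R).
Hypothesis Hpp : ping_pong A B c b.

Lemma letter_diff (t : bool) : Diff1plus (if t then A else B).
Proof. destruct t; [apply (pp_diffA _ _ _ _ Hpp) | apply (pp_diffB _ _ _ _ Hpp)]. Qed.

Lemma word_maps (w : list bool) (x : R) : c <= x <= b -> c <= apply_word A B w x <= b.
Proof.
  intros Hx. induction w as [|t w IH]; simpl; [exact Hx|].
  destruct t; [apply (pp_mapsA _ _ _ _ Hpp) | apply (pp_mapsB _ _ _ _ Hpp)]; exact IH.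
Qed.

Lemma word_increasing (w : list bool) (x y : R) : c <= x -> x < y -> y <= b ->
  apply_word A B w x < apply_word A B w y.
Proof.
  intros Hx Hxy Hy. pose proof Hpp as [Hc _ Hb _ _ _ _ _].
  induction w as [|t w IH]; simpl; [exact Hxy|].
  pose proof (word_maps w x ltac:(lra)). pose proof (word_maps w y ltac:(lra)).
  apply (diff_increasing _ (letter_diff t)); auto; unfold I01; lra.
Qed.

Definition image_length (w : list bool) : R := apply_word A B w b - apply_word A B w c.

Lemma image_length_nonneg (w : list bool) : 0 <= image_length w.
Proof.
  pose proof Hpp as [_ Hcb _ _ _ _ _ _].
  pose proof (word_increasing w c b ltac:(lra) Hcb ltac:(lra)). unfold image_length. lra.
Qed.

(* The images of J under the words of length n are pairwise disjoint (this is
   the ping-pong property), so their phi-lengths add up to at most that of J,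
   for every nondecreasing phi. *)
Lemma images_sum_weighted (n : nat) : forall phi : R -> R,
  (forall x y, c <= x -> x <= y -> y <= b -> phi x <= phi y) ->
  sumL (fun w => phi (apply_word A B w b) - phi (apply_word A B w c)) (words n)
    <= phi b - phi c.
Proof.
  pose proof Hpp as [Hc Hcb Hb DA DB HA HB Hdisj].
  induction n as [|n IH]; intros phi Hphi; simpl; [lra|].
  rewrite sumL_app, !sumL_map. simpl.
  assert (Hmono : forall l : R -> R, Diff1plus l -> (forall x, c <= x <= b -> c <= l x <= b) ->
            forall x y, c <= x -> x <= y -> y <= b -> phi (l x) <= phi (l y)).
  { intros l Dl Hl x y H1 H2 H3. pose proof (Hl x ltac:(lra)). pose proof (Hl y ltac:(lra)).
    apply Hphi; try lra. apply diff_nondecreasing; auto; unfold I01; lra. }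
  pose proof (IH (fun x => phi (A x)) (Hmono A DA HA)) as SA.
  pose proof (IH (fun x => phi (B x)) (Hmono B DB HB)) as SB. simpl in SA, SB.
  pose proof (HA b ltac:(lra)). pose proof (HA c ltac:(lra)).
  pose proof (HB b ltac:(lra)). pose proof (HB c ltac:(lra)).
  assert (phi (A b) <= phi b) by (apply Hphi; lra).
  assert (phi (B b) <= phi (A c)) by (apply Hphi; lra).
  assert (phi c <= phi (B c)) by (apply Hphi; lra).
  lra.
Qed.

Lemma images_sum (n : nat) : sumL image_length (words n) <= b - c.
Proof. apply (images_sum_weighted n (fun x => x)). intros; lra. Qed.

(* [long_step eta w] is 1 when the image of J under w is longer than eta;
   [n_long eta w] counts the suffixes of w (the intermediate images of J
   along w) that are long. *)
Definition long_step (eta : R) (w : list bool) : nat :=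
  if Rle_dec (image_length w) eta then 0 else 1.

Fixpoint n_long (eta : R) (w : list bool) : nat :=
  match w with nil => 0 | _ :: w' => n_long eta w' + long_step eta w' end.

Lemma sum_long_step (eta : R) (n : nat) : 0 < eta ->
  sumL (fun w => INR (long_step eta w)) (words n) <= (b - c) / eta.
Proof.
  intros Heta.
  assert (H : sumL (fun w => eta * INR (long_step eta w)) (words n) <= b - c).
  { eapply Rle_trans; [|apply (images_sum n)].
    apply sumL_le. intros w _. unfold long_step. destruct Rle_dec; simpl.
    - rewrite Rmult_0_r. apply image_length_nonneg.
    - lra. }
  rewrite sumL_scal in H. apply Rmult_le_reg_l with eta; [exact Heta|].
  replace (eta * ((b - c) / eta)) with (b - c) by (field; lra). exact H.
Qed.

Lemma sum_n_long (eta : R) (n : nat) : 0 < eta ->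
  sumL (fun w => INR (n_long eta w)) (words n) <= 2 * ((b - c) / eta) * (2 ^ n - 1).
Proof.
  intros Heta. induction n as [|n IH]; simpl; [lra|].
  rewrite sumL_app, !sumL_map. simpl.
  assert (Hsplit : sumL (fun w => INR (n_long eta w + long_step eta w)) (words n)
    <= sumL (fun w => INR (n_long eta w)) (words n)
       + sumL (fun w => INR (long_step eta w)) (words n)).
  { rewrite <- sumL_plus. apply sumL_le. intros w _. rewrite plus_INR. lra. }
  pose proof (sum_long_step eta n Heta). lra.
Qed.

Lemma word_nested (w : list bool) (x y : R) : c <= x -> x < y -> y <= b ->
  apply_word A B w c <= apply_word A B w x /\ apply_word A B w y <= apply_word A B w b.
Proof.
  intros Hx Hxy Hy. split.
  - destruct (Req_dec x c) as [->|Hne]; [lra | left; apply word_increasing; lra].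
  - destruct (Req_dec y b) as [->|Hne]; [lra | left; apply word_increasing; lra].
Qed.

Lemma letter_step (L eta : R) (t : bool) (w : list bool) (x y : R) : 1 <= L ->
  distortion_ctl A L eta -> distortion_ctl B L eta -> c <= x -> x < y -> y <= b ->
  slope (if t then A else B) (apply_word A B w x) (apply_word A B w y) <=
  L ^ long_step eta w * (3/2) *
    slope (if t then A else B) (apply_word A B w c) (apply_word A B w b).
Proof.
  intros HL HA HB Hx Hxy Hy. pose proof Hpp as [Hc Hcb Hb _ _ _ _ _].
  set (l := if t then A else B).
  set (u := apply_word A B w x). set (v := apply_word A B w y).
  set (u' := apply_word A B w c). set (v' := apply_word A B w b).
  destruct (word_nested w x y Hx Hxy Hy) as [Hu'u Hvv'].
  pose proof (word_maps w c ltac:(lra)). pose proof (word_maps w b ltac:(lra)).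
  assert (Iu' : I01 u') by (unfold I01, u' in *; lra).
  assert (Iv' : I01 v') by (unfold I01, v' in *; lra).
  assert (Hq' : 0 < slope l u' v').
  { apply slope_pos; [apply word_increasing; lra|].
    apply diff_increasing; [apply letter_diff | exact Iu' | exact Iv' | apply word_increasing; lra]. }
  assert (Hctl : distortion_ctl l L eta) by (unfold l; destruct t; assumption).
  destruct (Hctl u v u' v' Iu' Iv' Hu'u ltac:(apply word_increasing; lra) Hvv')
    as [Hlong Hshort].
  unfold long_step, image_length. fold u' v'. destruct Rle_dec as [Hs|Hs]; simpl.
  - rewrite Rmult_1_l. exact (Hshort Hs).
  - rewrite Rmult_1_r. eapply Rle_trans; [exact Hlong|]. apply Rmult_le_compat_r; lra.
Qed.

Lemma word_distortion (L eta : R) : 1 <= L ->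
  distortion_ctl A L eta -> distortion_ctl B L eta ->
  forall w x y, c <= x -> x < y -> y <= b ->
  slope (apply_word A B w) x y <=
    L ^ n_long eta w * (3/2) ^ length w * slope (apply_word A B w) c b.
Proof.
  intros HL HA HB w x y Hx Hxy Hy. pose proof Hpp as [Hc Hcb Hb _ _ _ _ _].
  induction w as [|t w IH].
  - simpl. unfold slope. right. field. split; lra.
  - set (l := if t then A else B).
    assert (Hchain : forall s r, c <= s -> s < r -> r <= b ->
      slope (apply_word A B (t :: w)) s r =
      slope l (apply_word A B w s) (apply_word A B w r) * slope (apply_word A B w) s r).
    { intros s r Hs Hsr Hr. pose proof (word_increasing w s r Hs Hsr Hr).
      apply (slope_comp l (apply_word A B w)); lra. }
    rewrite (Hchain x y), (Hchain c b) by lra.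
    pose proof (letter_step L eta t w x y HL HA HB Hx Hxy Hy) as Hletter. fold l in Hletter.
    assert (Hq : 0 < slope l (apply_word A B w x) (apply_word A B w y)).
    { destruct (word_nested w x y Hx Hxy Hy).
      pose proof (word_maps w c ltac:(lra)). pose proof (word_maps w b ltac:(lra)).
      pose proof (word_increasing w x y Hx Hxy Hy).
      apply slope_pos; [lra|].
      apply diff_increasing; [apply letter_diff | unfold I01; lra .. ]. }
    assert (Hw : 0 < slope (apply_word A B w) x y)
      by (apply slope_pos; [|apply word_increasing]; lra).
    simpl length. simpl n_long. rewrite pow_add. simpl pow.
    apply Rle_trans with
      ((L ^ long_step eta w * (3/2) * slope l (apply_word A B w c) (apply_word A B w b))
       * (L ^ n_long eta w * (3 / 2) ^ length w * slope (apply_word A B w) c b)).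
    + apply Rmult_le_compat; lra.
    + right; ring.
Qed.

Lemma short_word_contracts (L eta : R) (B0 : nat) (w : list bool) : 1 <= L ->
  distortion_ctl A L eta -> distortion_ctl B L eta -> (n_long eta w <= B0)%nat ->
  image_length w < (b - c) / (2 * (3/2) ^ length w * L ^ B0) ->
  forall x y, c <= x -> x < y -> y <= b -> slope (apply_word A B w) x y <= 1/2.
Proof.
  intros HL HA HB Hnl Hlen x y Hx Hxy Hy. pose proof Hpp as [_ Hcb _ _ _ _ _ _].
  eapply Rle_trans; [apply (word_distortion L eta HL HA HB w x y Hx Hxy Hy)|].
  set (T := (3/2) ^ length w). set (Q := L ^ B0).
  assert (HT : 0 < T) by (apply pow_lt; lra).
  assert (HQ : 1 <= Q) by (unfold Q; rewrite <- (pow1 B0); apply pow_incr; lra).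
  assert (HLQ : 0 <= L ^ n_long eta w <= Q) by (split; [apply pow_le; lra | apply Rle_pow; assumption]).
  replace (slope (apply_word A B w) c b) with (image_length w / (b - c)) by reflexivity.
  assert (Hs : 0 <= image_length w / (b - c) <= / (2 * T * Q)).
  { pose proof (image_length_nonneg w). split.
    - unfold Rdiv; apply Rmult_le_pos; [|left; apply Rinv_0_lt_compat]; lra.
    - apply Rmult_le_reg_l with (b - c); [lra|].
      replace ((b - c) * (image_length w / (b - c))) with (image_length w) by (field; lra).
      fold T Q in Hlen. unfold Rdiv in Hlen. lra. }
  apply Rle_trans with (Q * T * / (2 * T * Q)).
  - apply Rmult_le_compat; [apply Rmult_le_pos; lra | lra | |lra].
    apply Rmult_le_compat_r; lra.
  - right. field. lra.
Qed.

(* The counting argument: for n large some word of length n has few long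
   intermediate images and a short image of J, hence contracts J.  Here
   B0 > 4 (b - c) / eta bounds the number of long images and (4/3)^n > 4 L^B0. *)
Lemma contracting_word (L eta : R) : 1 <= L -> 0 < eta ->
  distortion_ctl A L eta -> distortion_ctl B L eta ->
  exists w, forall x y, c <= x -> x < y -> y <= b -> slope (apply_word A B w) x y <= 1/2.
Proof.
  intros HL Heta HA HB. pose proof Hpp as [_ Hcb _ _ _ _ _ _].
  set (K := (b - c) / eta).
  assert (HK : 0 < K) by (apply Rdiv_lt_0_compat; lra).
  destruct (INR_unbounded (4 * K)) as [B0 HB0].
  set (Q := L ^ B0).
  assert (HQ : 1 <= Q) by (unfold Q; rewrite <- (pow1 B0); apply pow_incr; lra).
  destruct (Pow_x_infinity (4/3) ltac:(rewrite Rabs_right; lra) (4 * Q + 1)) as [n Hn].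
  specialize (Hn n (Nat.le_refl n)).
  rewrite Rabs_right in Hn by (apply Rle_ge, pow_le; lra).
  set (T := (3/2) ^ n).
  assert (HT : 0 < T) by (apply pow_lt; lra).
  assert (E2n : 2 ^ n = (4/3) ^ n * T).
  { unfold T. rewrite <- Rpow_mult_distr. f_equal. field. }
  assert (H2n : 1 <= 2 ^ n) by (rewrite <- (pow1 n); apply pow_incr; lra).
  set (C := (b - c) / (2 * T * Q)).
  assert (HC : 0 < C) by (apply Rdiv_lt_0_compat; [lra | apply Rmult_lt_0_compat; lra]).
  destruct (averaging (words n) image_length (n_long eta) C B0) as [w [Hw [Hnl Hlen]]].
  - exact HC.
  - destruct B0; [simpl in HB0; lra | apply Nat.lt_0_succ].
  - intros w _; apply image_length_nonneg.
  - rewrite words_count. pose proof (sum_n_long eta n Heta) as Hs. fold K in Hs. nra.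
  - rewrite words_count. eapply Rle_lt_trans; [apply images_sum|].
    replace (C / 2 * 2 ^ n) with ((b - c) * ((4/3) ^ n / (4 * Q)))
      by (rewrite E2n; unfold C; field; lra).
    assert (1 < (4/3) ^ n / (4 * Q)).
    { apply Rmult_lt_reg_r with (4 * Q); [lra|].
      unfold Rdiv; rewrite Rmult_assoc, Rinv_l, Rmult_1_r; lra. }
    nra.
  - exists w. apply (short_word_contracts L eta B0 w HL HA HB Hnl).
    rewrite (words_length n w Hw). exact Hlen.
Qed.

End PingPong.

Lemma other_point_near (c b p alp : R) : c < b -> c <= p <= b -> 0 < alp ->
  exists y, c <= y <= b /\ y <> p /\ Rabs (y - p) < alp.
Proof.
  intros Hcb Hp Halp. destruct (Rlt_or_le p b) as [Hpb|Hpb].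
  - exists (Rmin (p + alp / 2) b).
    pose proof (Rmin_l (p + alp / 2) b). pose proof (Rmin_r (p + alp / 2) b).
    assert (p < Rmin (p + alp / 2) b) by (unfold Rmin; destruct Rle_dec; lra).
    split; [lra|]. split; [lra|]. unfold Rabs; destruct Rcase_abs; lra.
  - exists (Rmax (p - alp / 2) c).
    pose proof (Rmax_l (p - alp / 2) c). pose proof (Rmax_r (p - alp / 2) c).
    assert (Rmax (p - alp / 2) c < p) by (unfold Rmax; destruct Rle_dec; lra).
    split; [lra|]. split; [lra|]. unfold Rabs; destruct Rcase_abs; lra.
Qed.

Lemma parabolic_not_contracting (h : R -> R) (c b p : R) :
  0 <= c -> c < b -> b <= 1 -> c <= p <= b -> has_deriv01 h p 1 ->
  (forall x y, c <= x -> x < y -> y <= b -> slope h x y <= 1/2) -> False.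
Proof.
  intros Hc Hcb Hb Hp Hder Hcontr.
  destruct (limit1_in_eps _ _ _ _ Hder (1/2) ltac:(lra)) as [alp [Halp Hlim]].
  destruct (other_point_near c b p alp Hcb Hp Halp) as [y [Hy [Hyp Hya]]].
  assert (Iy : I01 y) by (unfold I01; lra).
  specialize (Hlim y (conj Iy Hyp) Hya).
  change ((h y - h p) / (y - p)) with (slope h p y) in Hlim.
  assert (Hq : slope h p y <= 1/2).
  { destruct (Rlt_or_le p y) as [Hpy|Hyp'].
    - apply Hcontr; lra.
    - rewrite slope_sym by lra. apply Hcontr; lra. }
  pose proof (Rle_abs (- (slope h p y - 1))). rewrite Rabs_Ropp in *. lra.
Qed.

(* A group without hyperbolic fixed points contains no ping-pong pair: a word
   contracting [c,b] (given by the counting argument) has a fixed point there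
   at which its derivative would have to be 1. *)
Lemma no_ping_pong (G : (R -> R) -> Prop) (A B : R -> R) (c b : R) :
  is_group01 G -> no_hyperbolic_fixed G -> G A -> G B -> ping_pong A B c b -> False.
Proof.
  intros HG Hnh GA GB Hpp. pose proof Hpp as [Hc Hcb Hb DA DB _ _ _].
  destruct (diff_distortion A DA) as [LA [eA [HLA [HeA HctlA]]]].
  destruct (diff_distortion B DB) as [LB [eB [HLB [HeB HctlB]]]].
  destruct (contracting_word A B c b Hpp (Rmax LA LB) (Rmin eA eB)) as [w Hw].
  - eapply Rle_trans; [exact HLA | apply Rmax_l].
  - apply Rmin_pos; assumption.
  - exact (distortion_ctl_weaken A LA eA _ _ DA HctlA (Rmax_l _ _) (Rmin_l _ _)).
  - exact (distortion_ctl_weaken B LB eB _ _ DB HctlB (Rmax_r _ _) (Rmin_r _ _)).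
  - destruct (monotone_fixed_point (apply_word A B w) c b) as [p [Hp Ep]].
    + lra.
    + intros x Hx. exact (word_maps A B c b Hpp w x Hx).
    + intros x y H1 [H2 | <-] H3; [left; apply (word_increasing A B c b Hpp); lra | lra].
    + apply (parabolic_not_contracting (apply_word A B w) c b p Hc Hcb Hb Hp); [|exact Hw].
      apply (represented_parabolic G); [exact Hnh | apply represented_word; auto | |exact Ep].
      unfold I01; lra.
Qed.

(* Far enough along their orbits, F^N1 c lies
   above the midpoint and H^N2 b below it, so (F^N1, H^N2) is a ping-pong
   pair on [c,b]. *)
Lemma no_crossing (G : (R -> R) -> Prop) (c b : R) (F H : R -> R) :
  is_group01 G -> (forall g, G g -> Diff1plus g) -> no_hyperbolic_fixed G ->
  0 <= c -> c < b -> b <= 1 ->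
  G F -> F b = b -> (forall x, c <= x < b -> x < F x) ->
  G H -> H c = c -> (forall x, c < x <= b -> H x < x) -> False.
Proof.
  intros HG HD Hnh Hc Hcb Hb GF EF HF GH EH HH.
  pose proof (HD F GF) as DF. pose proof (HD H GH) as DH.
  assert (MF : forall x, c <= x <= b -> c <= F x <= b).
  { intros x Hx. split.
    - destruct (Req_dec x b) as [->|Hne]; [lra | pose proof (HF x ltac:(lra)); lra].
    - rewrite <- EF. apply diff_nondecreasing; auto; unfold I01; lra. }
  assert (MH : forall x, c <= x <= b -> c <= H x <= b).
  { intros x Hx. split.
    - rewrite <- EH at 1. apply diff_nondecreasing; auto; unfold I01; lra.
    - destruct (Req_dec x c) as [->|Hne]; [lra | pose proof (HH x ltac:(lra)); lra]. }
  set (m := (c + b) / 2).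
  destruct (orbit_climbs F c b Hcb MF (cont01_on F c b (diff_cont F DF) Hc Hb) HF (b - m))
    as [N1 HN1]; [unfold m; lra|].
  destruct (orbit_descends H c b Hcb MH (cont01_on H c b (diff_cont H DH) Hc Hb) HH (m - c))
    as [N2 HN2]; [unfold m; lra|].
  destruct (represented_iter G F N1 HG GF DF) as [A [GA HA]].
  destruct (represented_iter G H N2 HG GH DH) as [B [GB HB]].
  apply (no_ping_pong G A B c b HG Hnh GA GB).
  constructor; try assumption; try (apply HD; assumption).
  - intros x Hx. rewrite HA by (unfold I01; lra).
    apply (iter_invariant (fun y => c <= y <= b)); assumption.
  - intros x Hx. rewrite HB by (unfold I01; lra).
    apply (iter_invariant (fun y => c <= y <= b)); assumption.
  - rewrite HA, HB by (unfold I01; lra). unfold m in *. lra.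
Qed.

(* Let y0 = F c < z = F y0; a power H^m brings z below y0,
   so F' = H^m o F moves c right and y0 left.  Its first fixed point b' in
   (c,y0] gives the crossing configuration (F', H) on [c,b']. *)
Lemma no_crossing_right (G : (R -> R) -> Prop) (c b : R) (F H : R -> R) :
  is_group01 G -> (forall g, G g -> Diff1plus g) -> no_hyperbolic_fixed G ->
  0 <= c -> c < b -> b <= 1 ->
  G F -> F b = b -> (forall x, c <= x < b -> x < F x) ->
  G H -> H c = c -> (forall x, c < x < b -> H x < x) -> False.
Proof.
  intros HG HD Hnh Hc Hcb Hb GF EF HF GH EH HH.
  pose proof (HD F GF) as DF. pose proof (HD H GH) as DH.
  assert (Ic : I01 c) by (unfold I01; lra). assert (Ib : I01 b) by (unfold I01; lra).
  assert (Fin : forall x, c <= x < b -> c < F x < b).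
  { intros x Hx. pose proof (HF x Hx). split; [lra|].
    rewrite <- EF. apply diff_increasing; auto; unfold I01; lra. }
  assert (Hin : forall x, c < x < b -> c < H x < b).
  { intros x Hx. pose proof (HH x Hx). split; [|lra].
    rewrite <- EH at 1. apply diff_increasing; auto; unfold I01; lra. }
  set (y0 := F c). assert (Hy0 : c < y0 < b) by (apply Fin; lra).
  set (z := F y0). assert (Hz : y0 < z < b) by (pose proof (HF y0 ltac:(lra)); pose proof (Fin y0 ltac:(lra)); unfold z; lra).
  destruct (orbit_descends H c z ltac:(lra)) with (eta := y0 - c) as [m Hm].
  { intros x Hx. destruct (Req_dec x c) as [->|Hne]; [rewrite EH; lra|].
    pose proof (Hin x ltac:(lra)). pose proof (HH x ltac:(lra)). lra. }
  { apply cont01_on; [apply diff_cont; exact DH | lra | lra]. }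
  { intros x Hx. apply HH; lra. }
  { lra. }
  destruct (represented_comp G (Nat.iter m H) F HG (represented_iter G H m HG GH DH)
              (represented_elt G F GF) (diff_maps F DF)) as [F' [GF' HF']].
  pose proof (HD F' GF') as DF'.
  assert (HF'c : c < F' c).
  { rewrite HF' by exact Ic. fold y0.
    pose proof (iter_invariant (fun x => c < x < b) H m y0 Hin Hy0). lra. }
  assert (HF'y0 : F' y0 < y0) by (rewrite HF' by (unfold I01; lra); fold z; lra).
  destruct (first_fixed_point F' c y0) as [b' [Hb' [Eb' Hbefore]]];
    [lra | apply cont01_on; [apply diff_cont; exact DF' | lra | lra] | exact HF'c | exact HF'y0 |].
  apply (no_crossing G c b' F' H HG HD Hnh Hc ltac:(lra) ltac:(lra) GF' Eb' Hbefore GH EH).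
  intros x Hx. apply HH; lra.
Qed.

(* The mirror statement, with F only known to move (c,b) to the right; now
   F' = F^m o H moves y0 = H b right and b left, and its last fixed point in
   [y0,b) gives the crossing configuration (F, F'). *)
Lemma no_crossing_left (G : (R -> R) -> Prop) (c b : R) (F H : R -> R) :
  is_group01 G -> (forall g, G g -> Diff1plus g) -> no_hyperbolic_fixed G ->
  0 <= c -> c < b -> b <= 1 ->
  G F -> F b = b -> (forall x, c < x < b -> x < F x) ->
  G H -> H c = c -> (forall x, c < x <= b -> H x < x) -> False.
Proof.
  intros HG HD Hnh Hc Hcb Hb GF EF HF GH EH HH.
  pose proof (HD F GF) as DF. pose proof (HD H GH) as DH.
  assert (Ic : I01 c) by (unfold I01; lra). assert (Ib : I01 b) by (unfold I01; lra).
  assert (Hin : forall x, c < x <= b -> c < H x < b).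
  { intros x Hx. pose proof (HH x Hx). split; [|lra].
    rewrite <- EH at 1. apply diff_increasing; auto; unfold I01; lra. }
  assert (Fin : forall x, c < x < b -> c < F x < b).
  { intros x Hx. pose proof (HF x Hx). split; [lra|].
    rewrite <- EF. apply diff_increasing; auto; unfold I01; lra. }
  set (y0 := H b). assert (Hy0 : c < y0 < b) by (apply Hin; lra).
  set (z := H y0). assert (Hz : c < z < y0) by (pose proof (HH y0 ltac:(lra)); pose proof (Hin y0 ltac:(lra)); unfold z; lra).
  destruct (orbit_climbs F z b ltac:(lra)) with (eta := b - y0) as [m Hm].
  { intros x Hx. destruct (Req_dec x b) as [->|Hne]; [rewrite EF; lra|].
    pose proof (Fin x ltac:(lra)). pose proof (HF x ltac:(lra)). lra. }
  { apply cont01_on; [apply diff_cont; exact DF | lra | lra]. }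
  { intros x Hx. apply HF; lra. }
  { lra. }
  destruct (represented_comp G (Nat.iter m F) H HG (represented_iter G F m HG GF DF)
              (represented_elt G H GH) (diff_maps H DH)) as [H' [GH' HH']].
  pose proof (HD H' GH') as DH'.
  assert (HH'b : H' b < b).
  { rewrite HH' by exact Ib. fold y0.
    pose proof (iter_invariant (fun x => c < x < b) F m y0 Fin Hy0). lra. }
  assert (HH'y0 : y0 < H' y0) by (rewrite HH' by (unfold I01; lra); fold z; lra).
  destruct (last_fixed_point H' y0 b) as [c' [Hc' [Ec' Hafter]]];
    [lra | apply cont01_on; [apply diff_cont; exact DH' | lra | lra] | exact HH'y0 | exact HH'b |].
  apply (no_crossing G c' b F H' HG HD Hnh ltac:(lra) ltac:(lra) Hb GF EF); try assumption.
  intros x Hx. apply HF; lra.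
Qed.

Lemma no_endpoint_inside (G : (R -> R) -> Prop) (a b c d : R) :
  is_group01 G -> (forall g, G g -> Diff1plus g) -> no_hyperbolic_fixed G ->
  succ_fixed G a b -> succ_fixed G c d -> exactly_one_in a b c d -> False.
Proof.
  intros HG HD Hnh Hab Hcd Hex.
  pose proof Hab as [_ [_ (Ha & Hlt_ab & Hb & _)]].
  pose proof Hcd as [_ [_ (Hc & Hlt_cd & Hd & _)]].
  destruct (both_directions G a b HG HD Hab)
    as [[fr (Gfr & _ & Efr & Hfr)] [fl (Gfl & Efl & _ & Hfl)]].
  destruct (both_directions G c d HG HD Hcd)
    as [[gr (Ggr & _ & Egr & Hgr)] [gl (Ggl & Egl & _ & Hgl)]].
  destruct Hex as [[Hin Hout]|[Hout Hin]].
  - (* a < c < b <= d *)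
    assert (b <= d) by (apply Rnot_lt_le; intro; apply Hout; lra).
    apply (no_crossing_right G c b fr gl HG HD Hnh); try assumption; try lra;
      intros x Hx; [apply Hfr | apply Hgl]; lra.
  - (* c <= a < d < b *)
    assert (c <= a) by (apply Rnot_lt_le; intro; apply Hout; lra).
    apply (no_crossing_left G a d gr fl HG HD Hnh); try assumption; try lra;
      intros x Hx; [apply Hgr | apply Hfl]; lra.
Qed.

Theorem theoremt (G : (R -> R) -> Prop) :
  is_group01 G ->
  (forall g, G g -> Diff1plus g) ->
  no_hyperbolic_fixed G ->
  no_linked_fixed G.
Proof.
  intros HG HD Hnh a b c d Hab Hcd [Hex|Hex].
  - exact (no_endpoint_inside G a b c d HG HD Hnh Hab Hcd Hex).
  - exact (no_endpoint_inside G c d a b HG HD Hnh Hcd Hab Hex).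
Qed.
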